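(* Let $n\ge2$ be an integer, $\nu\in\{1,2,\dots,n\}$ and $N=2n+1$. Let $z_1,\dots,z_N$ be the roots of the polynomial \[s_n(z)+z^Ns_n(1/z),\qquad s_n(z):=\sum_{j=0}^q\frac{(-z^\nu)^j}{\nu^jj!},\qquad q:=\lfloor n/\nu\rfloor.\] Then all $z_k$ lie on the unit circle, the numbers $t_k:=\arg z_k\in[0,2\pi)$ are pairwise distinct, and for every trigonometric polynomial \[T_n(t)=\sum_{m=1}^n\tau_m(t),\qquad\tau_m(t)=a_m\cos mt+b_m\sin mt,\quad a_m,b_m\in\mathbb{R},\] the identity $\tau_\nu(t)\equiv\sum_{k=1}^NT_n(t-t_k)$ holds for all real $t$. *)

From HB Require Import structures.
From mathcomp Require Import all_boot all_order all_algebra.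
From mathcomp Require Import all_classical all_reals all_analysis.
From mathcomp Require Import complex.
Set Implicit Arguments. Unset Strict Implicit. Unset Printing Implicit Defensive.
Import Order.TTheory GRing.Theory Num.Theory.
Local Open Scope ring_scope.
Local Open Scope complex_scope.

Definition s_poly (R : realType) (n nu : nat) : {poly R[i]} :=
  \sum_(j < (n %/ nu).+1)
     (((-1) ^+ j) / ((nu ^ j * j`!)%N%:R)) *: 'X^(nu * j).

(* z^N s_n(1/z) with N = 2n+1 (all exponents nu*j <= n < N) *)
Definition s_rev_poly (R : realType) (n nu : nat) : {poly R[i]} :=
  \sum_(j < (n %/ nu).+1)
     (((-1) ^+ j) / ((nu ^ j * j`!)%N%:R)) *: 'X^((2 * n).+1 - nu * j).

Definition P_poly (R : realType) (n nu : nat) : {poly R[i]} :=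
  s_poly R n nu + s_rev_poly R n nu.

Definition trig_poly (R : realType) (n : nat) (a b : nat -> R) (t : R) : R :=
  \sum_(1 <= m < n.+1) (a m * cos (m%:R * t) + b m * sin (m%:R * t)).

From HB Require Import structures.
From mathcomp Require Import all_boot all_order all_algebra.
From mathcomp Require Import all_classical all_reals all_analysis.
From mathcomp Require Import complex.
From mathcomp Require Import zify ring.
Set Implicit Arguments.
Unset Strict Implicit.
Unset Printing Implicit Defensive.
Import Order.TTheory GRing.Theory Num.Theory.
Local Open Scope ring_scope.

(* Write P = s + A with A(z) = z^N s(1/z). Since s(z) = e_q(-z^nu / nu), where e_q is
   the truncated exponential, and e_q has no zeros in the closed unit disk
   (Enestrom-Kakeya), all roots a of A lie in the open unit disk and s = \prod (1 - a z).
   The Blaschke factors (z - a) / (1 - conj(a) z) then show |A(z)| <> |s(z)| off the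
   unit circle, so every root of P has modulus 1; it is simple because
   z P'(z) / A(z) has positive real part there. Finally P = \prod_k (1 - z_k z) is
   self-reciprocal, and comparing logarithmic derivatives modulo z^(n+1) (Newton's
   identities) with z s' = -z^nu s + O(z^(n+1)) gives \sum_k z_k^m = [m = nu] for
   1 <= m <= n, which is the trigonometric identity by de Moivre. *)

Section TruncatedExponential.
Variable C : numClosedFieldType.

Definition exp_trunc (k : nat) (w : C) : C := \sum_(j < k.+1) w ^+ j / j`!%:R.

(* Enestrom-Kakeya: 1 - (1 - w) e_k(w) is a convex combination of w, ..., w^k.+1. *)
Definition exp_trunc_weight (k j : nat) : C :=
  (j.-1)`!%:R^-1 - (if (j <= k)%N then j`!%:R^-1 else 0).

Local Notation kappa := exp_trunc_weight.

Lemma sum_exp_trunc_weightX k w :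
  \sum_(j < k.+2) kappa k j * w ^+ j = 1 - (1 - w) * exp_trunc k w.
Proof.
rewrite /kappa; under eq_bigr do rewrite mulrBl.
rewrite sumrB big_ord_recl /= fact0 invr1 mul1r expr0.
rewrite [X in _ - X]big_ord_recr /= ltnn mul0r addr0.
under [X in _ + X - _]eq_bigr do rewrite /bump /= add1n /= exprS mulrCA.
rewrite -mulr_sumr.
under [X in _ - X]eq_bigr => j _ do rewrite (leq_ord j) mulrC.
under [X in w * X]eq_bigr do rewrite add0n mulrC.
by rewrite /exp_trunc; ring.
Qed.

Lemma exp_trunc_weight0 k : kappa k 0 = 0.
Proof. by rewrite /kappa subrr. Qed.

Lemma exp_trunc_weight_sum k : \sum_(j < k.+2) kappa k j = 1.
Proof.
have := sum_exp_trunc_weightX k 1; rewrite subrr mul0r subr0 => <-.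
by apply: eq_bigr => j _; rewrite expr1n mulr1.
Qed.

Lemma exp_trunc_weight_ge0 k j : 0 <= kappa k j.
Proof.
rewrite /kappa; case: ifP => _; last by rewrite subr0 invr_ge0 ler0n.
case: j => [|j] /=; first by rewrite fact0 subrr.
by rewrite subr_ge0 lef_pV2 ?posrE ?ltr0n ?fact_gt0 // ler_nat factS leq_pmull.
Qed.

Lemma exp_trunc_weight_gt0 k j : (2 <= j)%N -> 0 < kappa k j.
Proof.
move=> j_ge2; rewrite /kappa; case: ifP => _.
  case: j j_ge2 => [|j] //= j_ge2.
  rewrite subr_gt0 ltf_pV2 ?posrE ?ltr0n ?fact_gt0 // ltr_nat factS.
  by rewrite -[X in (X < _)%N]mul1n ltn_pmul2r ?fact_gt0.
by rewrite subr0 invr_gt0 ltr0n fact_gt0.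
Qed.

Lemma conjC_exp_trunc_weight k j : (kappa k j)^* = kappa k j.
Proof.
by rewrite /kappa rmorphB fmorphV rmorph_nat; case: ifP; rewrite ?rmorph0 ?fmorphV ?rmorph_nat.
Qed.

Lemma exp_trunc_neq0_lt1 k w : `|w| < 1 -> exp_trunc k w != 0.
Proof.
move=> w_lt1; apply/eqP => e0.
have : `|\sum_(j < k.+2) kappa k j * w ^+ j| <= `|w|.
  apply: le_trans (ler_norm_sum _ _ _) _.
  rewrite -[leRHS]mul1r -(exp_trunc_weight_sum k) mulr_suml.
  apply: ler_sum => -[[|j] j_lt] _ /=; first by rewrite exp_trunc_weight0 mul0r normr0 mul0r.
  rewrite normrM ger0_norm ?exp_trunc_weight_ge0 // normrX ler_wpM2l ?exp_trunc_weight_ge0 //.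
  by rewrite exprS ler_piMr ?normr_ge0 // exprn_ile1 ?normr_ge0 // ltW.
by rewrite sum_exp_trunc_weightX e0 mulr0 subr0 normr1 => /(lt_le_trans w_lt1); rewrite ltxx.
Qed.

(* On the unit circle, \sum_j kappa_j |1 - w^j|^2 = 0 forces w^2 = w^3 = 1. *)
Lemma exp_trunc_neq0_norm1 k w : (2 <= k)%N -> `|w| = 1 -> exp_trunc k w != 0.
Proof.
move=> k_ge2 w1; apply/eqP => e0.
have kw1 : \sum_(j < k.+2) kappa k j * w ^+ j = 1.
  by rewrite sum_exp_trunc_weightX e0 mulr0 subr0.
have sum0 : \sum_(j < k.+2) kappa k j * `|1 - w ^+ j| ^+ 2 = 0.
  transitivity (\sum_(j < k.+2)
      (2 * kappa k j - kappa k j * w ^+ j - (kappa k j * w ^+ j)^*)).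
    apply: eq_bigr => j _.
    have wj1 : w ^+ j * (w ^+ j)^* = 1 by rewrite -normCK normrX w1 !expr1n.
    have -> : (2 : C) = 1 + w ^+ j * (w ^+ j)^* by rewrite wj1.
    by rewrite normCK rmorphB rmorph1 rmorphM /= conjC_exp_trunc_weight; ring.
  by rewrite !sumrB -mulr_sumr exp_trunc_weight_sum -rmorph_sum kw1 rmorph1; ring.
have wj_eq1 (j : nat) : (2 <= j < k.+2)%N -> w ^+ j = 1.
  case/andP=> j_ge2 j_lt.
  have nneg (i : 'I_k.+2) : true -> 0 <= kappa k i * `|1 - w ^+ i| ^+ 2.
    by rewrite mulr_ge0 ?exp_trunc_weight_ge0 ?exprn_ge0.
  have /eqP := psumr_eq0P nneg sum0 (i := Ordinal j_lt) isT.
  rewrite mulf_eq0 gt_eqF ?exp_trunc_weight_gt0 //= expf_eq0 /= normr_eq0 subr_eq0.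
  by move/eqP <-.
have w_eq1 : w = 1.
  by have := wj_eq1 3%N ltac:(lia); rewrite exprS wj_eq1 ?mulr1 //; lia.
have : 1 <= exp_trunc k w.
  rewrite w_eq1 /exp_trunc big_ord_recl expr1n fact0 divr1 lerDl.
  by apply: sumr_ge0 => j _; rewrite expr1n divr_ge0 ?ler0n.
by rewrite e0 ler10.
Qed.

End TruncatedExponential.

Section BlaschkeFactors.
Variable C : numClosedFieldType.
Implicit Types a w z : C.

Lemma blaschke_factor_identity a z :
  `|1 - a^* * z| ^+ 2 - `|z - a| ^+ 2 = (1 - `|a| ^+ 2) * (1 - `|z| ^+ 2).
Proof. by rewrite !normCK !rmorphB !rmorph1 !rmorphM /= conjCK; ring. Qed.

Lemma norm_blaschke_prod_eq (r : seq C) z : r != [::] ->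
  {in r, forall a, `|a| < 1} ->
  \prod_(a <- r) `|z - a| = \prod_(a <- r) `|1 - a^* * z| -> `|z| = 1.
Proof.
move=> r_neq0 r_disk eq_prod.
have has_r : has (fun a => a \in r) r.
  by case: r r_neq0 {r_disk eq_prod} => // a r _; rewrite /= mem_head.
have lt_sq (x y : C) : (`|x| ^+ 2 < `|y| ^+ 2) = (`|x| < `|y|).
  by rewrite ltr_pXn2r // nnegrE normr_ge0.
case: (real_ltgtP (normr_real z) (@real1 C)) => // [z_lt1|z_gt1].
- have : \prod_(a <- r) `|z - a| < \prod_(a <- r) `|1 - a^* * z|.
    rewrite big_seq [X in _ < X]big_seq; apply: ltr_prod => // a /r_disk a_lt1.
    rewrite normr_ge0 -lt_sq -subr_gt0.
    by rewrite blaschke_factor_identity mulr_gt0 // subr_gt0 exprn_ilt1.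
  by rewrite eq_prod ltxx.
- have : \prod_(a <- r) `|1 - a^* * z| < \prod_(a <- r) `|z - a|.
    rewrite big_seq [X in _ < X]big_seq; apply: ltr_prod => // a /r_disk a_lt1.
    rewrite normr_ge0 -lt_sq -subr_gt0 -opprB.
    by rewrite blaschke_factor_identity oppr_gt0 pmulr_rlt0 ?subr_lt0 ?exprn_egt1 //
               subr_gt0 exprn_ilt1.
  by rewrite eq_prod ltxx.
Qed.

Lemma inv_subr1_add_conj_gt1 w : `|w| < 1 -> 1 < (1 - w)^-1 + ((1 - w)^-1)^*.
Proof.
move=> w_lt1.
have w_neq1 : 1 - w != 0 by rewrite subr_eq0; apply: contraTneq w_lt1 => <-; rewrite normr1 ltxx.
have wc_neq1 : 1 - w^* != 0 by rewrite -conjC1 -rmorphB conjC_eq0.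
rewrite -subr_gt0 fmorphV rmorphB rmorph1.
have -> : (1 - w)^-1 + (1 - w^*)^-1 - 1 = (1 - w * w^*) / ((1 - w) * (1 - w^*)).
  by field; rewrite wc_neq1 w_neq1.
have -> : (1 - w) * (1 - w^*) = `|1 - w| ^+ 2 by rewrite normCK rmorphB rmorph1.
by rewrite -normCK divr_gt0 ?subr_gt0 ?exprn_ilt1 // exprn_gt0 // normr_gt0.
Qed.

(* For |z| = 1, z (a / (1 - a z) + 1 / (z - a)) = (1 - a z)^-1 + (1 - a / z)^-1 - 1,
   and both inverses have real part > 1/2. *)
Lemma sum_blaschke_logderiv_neq0 (r : seq C) z : r != [::] ->
  {in r, forall a, `|a| < 1} -> `|z| = 1 ->
  \sum_(a <- r) (a / (1 - a * z) + (z - a)^-1) != 0.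
Proof.
move=> r_neq0 r_disk z1.
have z_neq0 : z != 0 by rewrite -normr_gt0 z1.
pose tau a := (1 - a * z)^-1 - 1 + (1 - a * z^-1)^-1.
have tau_pos a : a \in r -> 0 < tau a + (tau a)^*.
  move=> /r_disk a_lt1.
  have az_lt1 : `|a * z| < 1 by rewrite normrM z1 mulr1.
  have azV_lt1 : `|a * z^-1| < 1 by rewrite normrM normfV z1 invr1 mulr1.
  have -> : tau a + (tau a)^* = ((1 - a * z)^-1 + ((1 - a * z)^-1)^* - 1)
                               + ((1 - a / z)^-1 + ((1 - a / z)^-1)^* - 1).
    by rewrite /tau !rmorphD rmorphN rmorph1; ring.
  by rewrite addr_gt0 // subr_gt0 inv_subr1_add_conj_gt1.
have tauE a : a \in r -> z * (a / (1 - a * z) + (z - a)^-1) = tau a.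
  move=> /r_disk a_lt1.
  have neq1 w : `|w| = 1 -> 1 - a * w != 0.
    move=> w1; rewrite subr_eq0; apply: contraTneq a_lt1 => /(congr1 Num.norm).
    by rewrite normr1 normrM w1 mulr1 => <-; rewrite ltxx.
  have za_neq0 : z - a != 0 by rewrite subr_eq0; apply: contraTneq a_lt1 => <-; rewrite z1 ltxx.
  by rewrite /tau; field; rewrite z_neq0 za_neq0 neq1 // neq1 // normfV z1 invr1.
have has_r : has (fun a => a \in r) r.
  by case: r r_neq0 {r_disk tau_pos tauE} => // a r _; rewrite /= mem_head.
apply: contraTneq isT => sum0.
have : \sum_(a <- r | a \in r) (0 : C) < \sum_(a <- r | a \in r) (tau a + (tau a)^*).
  exact: ltr_sum.
rewrite big1 // big_split /= -rmorph_sum.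
under eq_bigr => a a_r do rewrite -(tauE a a_r).
by rewrite -big_seq -mulr_sumr sum0 mulr0 rmorph0 addr0 ltxx.
Qed.

End BlaschkeFactors.

Lemma poly_eq_on_neq0 (R : numDomainType) (p q : {poly R}) :
  (forall x, x != 0 -> p.[x] = q.[x]) -> p = q.
Proof.
move=> eq_pq; apply/eqP; rewrite -subr_eq0; apply: contraT => d_neq0.
pose xs := [seq i.+1%:R : R | i <- iota 0 (size (p - q))].
have roots_xs : all (root (p - q)) xs.
  by apply/allP => _ /mapP[i _ ->]; rewrite /root hornerD hornerN eq_pq ?subrr ?pnatr_eq0.
have uniq_xs : uniq xs.
  by rewrite map_inj_uniq ?iota_uniq // => i j /eqP; rewrite eqr_nat => /eqP[].
by have := max_poly_roots d_neq0 roots_xs uniq_xs; rewrite size_map size_iota ltnn.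
Qed.

Lemma prod_subVr (F : fieldType) (I : Type) (r : seq I) (g : I -> F) y : y != 0 ->
  y ^+ size r * \prod_(i <- r) (y^-1 - g i) = \prod_(i <- r) (1 - g i * y).
Proof.
move=> y_neq0; elim: r => [|a r IH]; first by rewrite !big_nil expr0 mul1r.
by rewrite !big_cons /= exprS -IH mulrACA mulrBr mulfV // [y * _]mulrC.
Qed.

Lemma horner_deriv_prod (F : fieldType) (I : eqType) (r : seq I) (L : I -> {poly F}) x :
  {in r, forall i, (L i).[x] != 0} ->
  (\prod_(i <- r) L i)^`().[x]
    = (\prod_(i <- r) (L i).[x]) * \sum_(i <- r) (L i)^`().[x] / (L i).[x].
Proof.
elim: r => [|i r IH] L_neq0; first by rewrite !big_nil derivC horner0 mulr0.
rewrite !big_cons derivM hornerD !hornerM IH ?horner_prod => [|j j_r]; last first.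
  by apply: L_neq0; rewrite inE j_r orbT.
by field; apply: L_neq0; rewrite mem_head.
Qed.

Section ReversedFactors.
Variable R : comNzRingType.
Implicit Types (a : R) (n : nat).

Definition revXsubC a : {poly R} := 1 - a%:P * 'X.

Lemma horner_revXsubC a y : (revXsubC a).[y] = 1 - a * y.
Proof. by rewrite /revXsubC hornerD hornerN hornerCM hornerX hornerC. Qed.

Lemma deriv_revXsubC a : (revXsubC a)^`() = - a%:P.
Proof. by rewrite /revXsubC derivB derivC sub0r derivM derivC mul0r add0r derivX mulr1. Qed.

(* (1 - aX)^-1 = 1 + geom_trunc n a + O(X^n.+1) *)
Definition geom_trunc n a : {poly R} := \sum_(1 <= m < n.+1) (a ^+ m)%:P * 'X^m.

Lemma revXsubC_mul_geom_trunc n a :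
  revXsubC a * geom_trunc n a = a%:P * 'X - (a ^+ n.+1)%:P * 'X^(n.+1).
Proof.
elim: n => [|n IH]; first by rewrite /geom_trunc big_geq // mulr0 !expr1 subrr.
rewrite /geom_trunc big_nat_recr //= mulrDr IH /revXsubC.
by rewrite [a ^+ n.+2]exprS polyCM ['X^(n.+2)]exprS; ring.
Qed.

Lemma coef_geom_trunc n a m : (1 <= m <= n)%N -> (geom_trunc n a)`_m = a ^+ m.
Proof.
move=> m_range; rewrite /geom_trunc coef_sum.
under eq_bigr do rewrite coefCM coefXn.
have m_in : m \in index_iota 1 n.+1 by rewrite mem_index_iota.
rewrite (bigD1_seq m m_in (iota_uniq _ _)) /= eqxx mulr1 big1 ?addr0 // => i.
by rewrite eq_sym => /negbTE ->; rewrite mulr0.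
Qed.

Lemma X_derivXn m : 'X * ('X^m)^`() = m%:R%:P * 'X^m :> {poly R}.
Proof.
rewrite derivXn; case: m => [|m]; first by rewrite mulr0n mulr0 polyC0 mul0r.
by rewrite /= polyC_natr mulrnAr -exprS mulr_natl.
Qed.

End ReversedFactors.

Lemma reciprocal_prod_XsubC (F : numFieldType) (I : Type) (r : seq I) (g : I -> F)
    (p : {poly F}) :
  (forall y, y != 0 -> p.[y] = y ^+ size r * (\prod_(i <- r) ('X - (g i)%:P)).[y^-1]) ->
  p = \prod_(i <- r) revXsubC (g i).
Proof.
move=> p_rec; apply: poly_eq_on_neq0 => y y_neq0.
rewrite p_rec // !horner_prod.
under eq_bigr do rewrite hornerXsubC.
under [RHS]eq_bigr do rewrite horner_revXsubC.
exact: prod_subVr.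
Qed.

Lemma deriv_prod_XsubC_neq0_inj (F : fieldType) (I : finType) (z : I -> F) :
  (forall i, (\prod_j ('X - (z j)%:P))^`().[z i] != 0) -> injective z.
Proof.
move=> simple i j zij; apply: contraTeq (simple i) => i_neq_j.
rewrite (bigD1 i) //= derivM hornerD !hornerM hornerXsubC subrr mul0r addr0.
rewrite horner_prod (bigD1 j) /=; last by rewrite eq_sym.
by rewrite hornerXsubC zij subrr mul0r mulr0 eqxx.
Qed.

(* Newton's identities: X L' / L = - \sum_i geom_trunc n (g i) mod X^n.+1,
   for L = \prod_i (1 - g i X). *)
Lemma dvdp_Xn_logderiv_prod (F : fieldType) n (I : Type) (r : seq I) (g : I -> F) :
  'X^(n.+1) %| 'X * (\prod_(i <- r) revXsubC (g i))^`()
             + (\prod_(i <- r) revXsubC (g i)) * \sum_(i <- r) geom_trunc n (g i).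
Proof.
elim: r => [|i r IH]; first by rewrite !big_nil derivC !mulr0 addr0 dvdp0.
rewrite !big_cons derivM deriv_revXsubC.
set E := \prod_(j <- r) _; set Q := \sum_(j <- r) _.
have -> : 'X * (- (g i)%:P * E + revXsubC (g i) * E^`())
          + revXsubC (g i) * E * (geom_trunc n (g i) + Q)
   = revXsubC (g i) * ('X * E^`() + E * Q)
     + E * (revXsubC (g i) * geom_trunc n (g i) - (g i)%:P * 'X) by ring.
rewrite revXsubC_mul_geom_trunc.
have -> : (g i)%:P * 'X - (g i ^+ n.+1)%:P * 'X^(n.+1) - (g i)%:P * 'X
          = - (g i ^+ n.+1)%:P * 'X^(n.+1) by ring.
by rewrite dvdp_add ?dvdp_mull // dvdp_mulIr.
Qed.

Lemma dvdp_Xn_Xderiv (F : fieldType) k (p : {poly F}) : 'X^(k.+1) %| p -> 'X^(k.+1) %| 'X * p^`().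
Proof.
move=> /dvdpP[d ->]; rewrite derivM derivXn /= mulrDr dvdp_add //.
  by rewrite mulrA dvdp_mulIr.
by rewrite mulrnAr mulrnAr -mulr_natr mulrC dvdp_mull // mulrCA -exprS dvdp_mull.
Qed.

Section RootsOfP.
Variable R : realType.
Variables n nu : nat.
Hypothesis n_ge2 : (2 <= n)%N.
Hypothesis nu_range : (1 <= nu <= n)%N.

Local Notation C := R[i].
Local Notation N := (2 * n).+1.
Local Notation q := (n %/ nu)%N.
Local Notation s := (s_poly R n nu).
Local Notation srev := (s_rev_poly R n nu).
Local Notation P := (P_poly R n nu).

Definition s_coef (j : nat) : C := (-1) ^+ j / (nu ^ j * j`!)%N%:R.

Lemma nu_gt0 : (0 < nu)%N. Proof. by case/andP: nu_range. Qed.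

Lemma mul_nu_le (j : 'I_q.+1) : (nu * j <= n)%N.
Proof. by rewrite (leq_trans _ (leq_divM n nu)) // mulnC leq_mul2r -ltnS ltn_ord orbT. Qed.

Lemma horner_s y : s.[y] = \sum_(j < q.+1) s_coef j * y ^+ (nu * j).
Proof. by rewrite horner_sum; apply: eq_bigr => j _; rewrite hornerZ hornerXn. Qed.

Lemma horner_srev y : srev.[y] = \sum_(j < q.+1) s_coef j * y ^+ (N - nu * j).
Proof. by rewrite horner_sum; apply: eq_bigr => j _; rewrite hornerZ hornerXn. Qed.

Lemma horner_srevV y : y != 0 -> srev.[y] = y ^+ N * s.[y^-1].
Proof.
move=> y_neq0; rewrite horner_srev horner_s mulr_sumr; apply: eq_bigr => j _.
by rewrite exprVn mulrCA expfB //; have := mul_nu_le j; lia.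
Qed.

Lemma horner_sV y : y != 0 -> s.[y] = y ^+ N * srev.[y^-1].
Proof.
by move=> y_neq0; rewrite horner_srevV ?invr_eq0 // invrK mulrA -exprMn mulfV // expr1n mul1r.
Qed.

Lemma horner_s0 : s.[0] = 1.
Proof.
rewrite horner_s big_ord_recl muln0 expr0 mulr1 big1 ?addr0.
  by rewrite /s_coef expr0 expn0 mul1n fact0 divr1.
by move=> j _; rewrite expr0n muln_eq0 gtn_eqF ?nu_gt0 // mulr0.
Qed.

Lemma srev_monic_size : srev \is monic /\ size srev = N.+1.
Proof.
rewrite /s_rev_poly big_ord_recl /= muln0 subn0 expr0 expn0 mul1n fact0 divr1 scale1r.
set B := \sum_(i < _) _.
have size_B : (size B < size ('X^N : {poly C}))%N.
  rewrite size_polyXn ltnS (leq_trans (size_sum _ _ _)) //; apply/bigmax_leqP => j _.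
  rewrite (leq_trans (size_scale_leq _ _)) // size_polyXn /bump /=.
  by have := nu_gt0; lia.
by rewrite monicE lead_coefDl // lead_coefXn size_polyDl // size_polyXn.
Qed.

Lemma horner_s_exp_trunc u : s.[u] = exp_trunc q (- u ^+ nu / nu%:R).
Proof.
rewrite horner_s /exp_trunc; apply: eq_bigr => -[j _] _ /=.
have nu_neq0 : (nu%:R : C) != 0 by rewrite pnatr_eq0 -lt0n nu_gt0.
have fact_neq0 : (j`!%:R : C) != 0 by rewrite pnatr_eq0 -lt0n fact_gt0.
by rewrite /s_coef natrM natrX exprM invfM mulNr [in RHS]exprNn [in RHS]exprMn exprVn; ring.
Qed.

Lemma horner_s_neq0 u : `|u| <= 1 -> s.[u] != 0.
Proof.
move=> u_le1; rewrite horner_s_exp_trunc.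
have nu_pos : (0 < nu%:R :> C) by rewrite ltr0n nu_gt0.
have w_le : `|- u ^+ nu / nu%:R| <= nu%:R^-1.
  rewrite normrM normrN normrX normfV normr_nat -[leRHS]mul1r.
  by rewrite ler_wpM2r ?invr_ge0 ?ler0n // exprn_ile1.
have [nu1|nu_ge2] : nu = 1%N \/ (2 <= nu)%N by move: nu_range; lia.
- move: w_le; rewrite nu1 divn1 invr1 le_eqVlt => /orP[/eqP w1|w_lt1].
    exact: exp_trunc_neq0_norm1.
  exact: exp_trunc_neq0_lt1.
- by apply/exp_trunc_neq0_lt1/(le_lt_trans w_le); rewrite invf_lt1 // ltr1n.
Qed.

Lemma srev_roots_in_disk : exists r : seq C,
  [/\ srev = \prod_(a <- r) ('X - a%:P), size r = N & {in r, forall a, `|a| < 1}].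
Proof.
have [r srevE] := closed_field_poly_normal srev.
have [/monicP lc_srev size_srev] := srev_monic_size.
rewrite lc_srev scale1r in srevE.
exists r; split=> //; first by move: size_srev; rewrite srevE size_prod_XsubC => -[].
move=> a a_r; have : root srev a by rewrite srevE root_prod_XsubC.
rewrite real_ltNge ?normr_real //; apply: contraL => a_ge1.
have a_neq0 : a != 0 by rewrite -normr_gt0 (lt_le_trans ltr01 a_ge1).
rewrite /root horner_srevV // mulf_eq0 expf_eq0 (negbTE a_neq0) andbF /=.
by apply: horner_s_neq0; rewrite normfV invf_le1 // (lt_le_trans ltr01 a_ge1).
Qed.

Lemma s_prod_revXsubC (r : seq C) :
  srev = \prod_(a <- r) ('X - a%:P) -> size r = N -> s = \prod_(a <- r) revXsubC a.
Proof.
by move=> srevE size_r; apply: reciprocal_prod_XsubC => y y_neq0; rewrite size_r -srevE horner_sV.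
Qed.

Lemma conjC_horner_s y : (s.[y])^* = s.[y^*].
Proof.
rewrite !horner_s rmorph_sum; apply: eq_bigr => j _.
by rewrite rmorphM rmorphXn /s_coef rmorphM rmorphXn rmorphN1 fmorphV rmorph_nat.
Qed.

Lemma root_P_norm1 z : root P z -> `|z| = 1.
Proof.
move=> /rootP Pz0; have [r [srevE size_r r_disk]] := srev_roots_in_disk.
have r_neq0 : r != [::] by rewrite -size_eq0 size_r.
apply: (norm_blaschke_prod_eq r_neq0 r_disk).
have -> : \prod_(a <- r) `|z - a| = `|srev.[z]|.
  by rewrite srevE horner_prod normr_prod; apply: eq_bigr => a _; rewrite hornerXsubC.
have -> : \prod_(a <- r) `|1 - a^* * z| = `|s.[z]|.
  rewrite -norm_conjC conjC_horner_s (s_prod_revXsubC srevE size_r) horner_prod normr_prod.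
  apply: eq_bigr => a _; rewrite horner_revXsubC -norm_conjC.
  by rewrite rmorphB rmorph1 rmorphM /= conjCK.
by move: Pz0; rewrite hornerD => /eqP; rewrite addr_eq0 => /eqP ->; rewrite normrN.
Qed.

(* At a root z, P'(z) = srev(z) \sum_a (a / (1 - a z) + 1 / (z - a)), where a ranges
   over the roots of srev. *)
Lemma deriv_P_root_neq0 z : root P z -> P^`().[z] != 0.
Proof.
move=> Pz0; have z1 := root_P_norm1 Pz0.
have [r [srevE size_r r_disk]] := srev_roots_in_disk.
have sE := s_prod_revXsubC srevE size_r.
have za_neq0 a : a \in r -> z - a != 0.
  by move=> /r_disk; apply: contraTneq => /eqP; rewrite subr_eq0 => /eqP <-; rewrite z1 ltxx.
have az_neq1 a : a \in r -> 1 - a * z != 0.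
  move=> /r_disk; apply: contraTneq => /eqP; rewrite subr_eq0 => /eqP/(congr1 Num.norm).
  by rewrite normr1 normrM z1 mulr1 => <-; rewrite ltxx.
have srev_z_neq0 : srev.[z] != 0.
  rewrite srevE horner_prod prodf_seq_neq0; apply/allP => a a_r /=.
  by rewrite hornerXsubC za_neq0.
have s_z : s.[z] = - srev.[z].
  by apply/eqP; rewrite -addr_eq0 -hornerD.
have deriv_srev : srev^`().[z] = srev.[z] * \sum_(a <- r) (z - a)^-1.
  rewrite srevE horner_deriv_prod => [|a /za_neq0]; last by rewrite hornerXsubC.
  rewrite horner_prod; congr (_ * _); apply: eq_bigr => a _.
  by rewrite derivXsubC hornerXsubC -polyC1 hornerC div1r.
have deriv_s : s^`().[z] = s.[z] * \sum_(a <- r) - a / (1 - a * z).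
  rewrite sE horner_deriv_prod => [|a /az_neq1]; last by rewrite horner_revXsubC.
  rewrite horner_prod; congr (_ * _); apply: eq_bigr => a _.
  by rewrite deriv_revXsubC hornerN hornerC horner_revXsubC.
rewrite /P_poly derivD hornerD deriv_s deriv_srev s_z mulNr -mulrN -mulrDr mulf_neq0 //.
rewrite -sumrN -big_split /=.
under eq_bigr do rewrite mulNr opprK.
by apply: sum_blaschke_logderiv_neq0; rewrite // -size_eq0 size_r.
Qed.

Lemma root_P_roots (z : 'I_N -> C) k : P = \prod_(k < N) ('X - (z k)%:P) -> root P (z k).
Proof.
move=> ->; rewrite -(big_map z xpredT (fun a => 'X - a%:P)) root_prod_XsubC.
by rewrite map_f ?mem_index_enum.
Qed.

Lemma P_roots_inj (z : 'I_N -> C) : P = \prod_(k < N) ('X - (z k)%:P) -> injective z.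
Proof.
move=> PE; apply: deriv_prod_XsubC_neq0_inj => k.
by rewrite -PE deriv_P_root_neq0 ?(root_P_roots _ PE).
Qed.

Lemma s_coefS j : s_coef j.+1 * (nu * j.+1)%:R = - s_coef j.
Proof.
have nu_neq0 : (nu%:R : C) != 0 by rewrite pnatr_eq0 -lt0n nu_gt0.
have fact_neq0 : (j`!%:R : C) != 0 by rewrite pnatr_eq0 -lt0n fact_gt0.
have nuj_neq0 : ((nu ^ j)%:R : C) != 0 by rewrite natrX expf_neq0.
have Sj_neq0 : 1 + (j%:R : C) != 0 by rewrite addrC natr1 pnatr_eq0.
by rewrite /s_coef exprS expnS factS !natrM; field; rewrite fact_neq0 nuj_neq0 Sj_neq0 nu_neq0.
Qed.

(* The differential equation of e_q(-z^nu/nu), up to its truncation term. *)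
Lemma X_deriv_s : 'X * s^`() = - ('X^nu * s) + (s_coef q)%:P * 'X^(nu * q.+1).
Proof.
suff <- : 'X * s^`() + 'X^nu * s = (s_coef q)%:P * 'X^(nu * q.+1).
  by rewrite [X in _ + X]addrC addKr.
rewrite /s_poly raddf_sum /= !mulr_sumr.
under eq_bigr do rewrite derivZ -scalerAr X_derivXn -mul_polyC.
under [X in _ + X]eq_bigr do rewrite -scalerAr -exprD -mulnS -mul_polyC.
rewrite big_ord_recl /= muln0 mulr0n polyC0 mul0r mulr0 add0r.
rewrite big_ord_recr /= addrA -big_split /= big1 ?add0r // => j _.
rewrite /bump /= add1n mulrA -polyCM -mulrDl -polyCD.
by have := s_coefS j; rewrite /s_coef => ->; rewrite addNr polyC0 mul0r.
Qed.

Lemma dvdp_Xn_srev : 'X^(n.+1) %| srev.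
Proof.
apply: (big_ind (fun p : {poly C} => 'X^(n.+1) %| p)) => [|p p'|j _].
- exact: dvdp0.
- exact: dvdp_add.
- by rewrite -mul_polyC dvdp_mull // dvdp_exp2l //; have := mul_nu_le j; lia.
Qed.

Lemma P_reciprocal y : y != 0 -> P.[y] = y ^+ N * P.[y^-1].
Proof.
by move=> y_neq0; rewrite !hornerD (horner_sV y_neq0) (horner_srevV y_neq0) mulrDr addrC.
Qed.

Lemma power_sum_roots (z : 'I_N -> C) : P = \prod_(k < N) ('X - (z k)%:P) ->
  forall m, (1 <= m <= n)%N -> \sum_(k < N) z k ^+ m = (m == nu)%:R.
Proof.
move=> PE m m_range.
have P_rev : P = \prod_(k < N) revXsubC (z k).
  apply: reciprocal_prod_XsubC => y y_neq0.
  by rewrite -PE P_reciprocal // [index_enum _]unlock -enumT size_enum_ord.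
pose Q := \sum_(k < N) geom_trunc n (z k).
have dvd_P : 'X^(n.+1) %| 'X * P^`() + P * Q.
  by rewrite P_rev; apply: dvdp_Xn_logderiv_prod.
have dvd_srev : 'X^(n.+1) %| 'X * srev^`() + srev * Q.
  by rewrite dvdp_add ?dvdp_Xn_Xderiv ?dvdp_mulr ?dvdp_Xn_srev.
have dvd_s : 'X^(n.+1) %| s * (Q - 'X^nu).
  have -> : s * (Q - 'X^nu) = ('X * P^`() + P * Q) - ('X * srev^`() + srev * Q)
                              - (s_coef q)%:P * 'X^(nu * q.+1).
    by rewrite /P_poly derivD [_ * (s^`() + _)]mulrDr X_deriv_s; ring.
  rewrite !dvdp_sub // dvdp_mull // dvdp_exp2l //.
  by rewrite mulnC ltn_ceil ?nu_gt0.
have coprime_s : coprimep 'X^(n.+1) s.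
  rewrite coprimep_expl // coprimep_sym -[X in coprimep _ X]subr0 -polyC0.
  by rewrite coprimep_XsubC /root horner_s0 oner_eq0.
have /dvdpP[D QE] : 'X^(n.+1) %| Q - 'X^nu by rewrite -(Gauss_dvdpr _ coprime_s).
have : (Q - 'X^nu)`_m = 0 by rewrite QE coefMXn ltnS; case/andP: m_range => _ ->.
rewrite coefB coefXn /Q coef_sum => /eqP; rewrite subr_eq0 => /eqP <-.
by apply: eq_bigr => k _; rewrite coef_geom_trunc.
Qed.

End RootsOfP.

Local Open Scope complex_scope.

Section Trigonometric.
Variable R : realType.

Lemma cos_sin_exprn (t : R) m :
  (cos t +i* sin t) ^+ m = cos (m%:R * t) +i* sin (m%:R * t).
Proof.
elim: m => [|m IH]; first by rewrite mul0r cos0 sin0.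
rewrite exprS IH -addn1 natrD mulrDl mul1r addrC cosD sinD.
by simpc; congr (_ +i* _); ring.
Qed.

Lemma sum_complex (I : Type) (r : seq I) (f g : I -> R) :
  \sum_(i <- r) (f i +i* g i) = (\sum_(i <- r) f i) +i* (\sum_(i <- r) g i).
Proof. by elim: r => [|i r IH]; rewrite ?big_nil // !big_cons IH. Qed.

Lemma sum_cos_sin_of_power_sum (I : finType) (t : I -> R) m (c : R) :
  \sum_i (cos (t i) +i* sin (t i)) ^+ m = c%:C ->
  \sum_i cos (m%:R * t i) = c /\ \sum_i sin (m%:R * t i) = 0.
Proof. by under eq_bigr do rewrite cos_sin_exprn; rewrite sum_complex => -[]. Qed.

Lemma sum_harmonic_shift (I : finType) (t : I -> R) m (c a b x : R) :
  \sum_i cos (m%:R * t i) = c -> \sum_i sin (m%:R * t i) = 0 ->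
  \sum_i (a * cos (m%:R * (x - t i)) + b * sin (m%:R * (x - t i)))
    = c * (a * cos (m%:R * x) + b * sin (m%:R * x)).
Proof.
move=> sum_cos sum_sin.
transitivity (\sum_i ((a * cos (m%:R * x) + b * sin (m%:R * x)) * cos (m%:R * t i)
                      + (a * sin (m%:R * x) - b * cos (m%:R * x)) * sin (m%:R * t i))).
  by apply: eq_bigr => i _; rewrite mulrBr cosB sinB; ring.
by rewrite big_split /= -!mulr_sumr sum_cos sum_sin mulr0 addr0 mulrC.
Qed.

Lemma sum_trig_poly_shift (I : finType) (t : I -> R) n nu (a b : nat -> R) x :
  (1 <= nu <= n)%N ->
  (forall m, (1 <= m <= n)%N ->
     \sum_i cos (m%:R * t i) = (m == nu)%:R /\ \sum_i sin (m%:R * t i) = 0) ->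
  \sum_i trig_poly n a b (x - t i) = a nu * cos (nu%:R * x) + b nu * sin (nu%:R * x).
Proof.
move=> nu_range harmonic; rewrite /trig_poly exchange_big /=.
rewrite (eq_big_nat _ _ (F2 := fun m => (m == nu)%:R *
           (a m * cos (m%:R * x) + b m * sin (m%:R * x)))); last first.
  by move=> m m_range; have [? ?] := harmonic m m_range; exact: sum_harmonic_shift.
have nu_in : nu \in index_iota 1 n.+1 by rewrite mem_index_iota.
rewrite (bigD1_seq nu nu_in (iota_uniq _ _)) /= eqxx mul1r big1 ?addr0 // => m.
by move=> /negbTE ->; rewrite mul0r.
Qed.

End Trigonometric.

Theorem theorem2p3 (R : realType) (n nu : nat) (z : 'I_(2 * n).+1 -> R[i]) :
  (2 <= n)%N -> (1 <= nu <= n)%N ->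
  P_poly R n nu = \prod_(k < (2 * n).+1) ('X - (z k)%:P) ->
  (forall k, `|z k| = 1) /\
  (forall t : 'I_(2 * n).+1 -> R,
     (forall k, 0 <= t k < 2 * pi /\ z k = (cos (t k)) +i* (sin (t k))) ->
     injective t /\
     (forall (a b : nat -> R) (x : R),
        a nu * cos (nu%:R * x) + b nu * sin (nu%:R * x)
        = \sum_(k < (2 * n).+1) trig_poly n a b (x - t k))).
Proof.
move=> n_ge2 nu_range PE; split=> [k|t tE].
  exact: (@root_P_norm1 R n nu n_ge2 nu_range _ (root_P_roots k PE)).
split=> [i j tij|a b x].
  by apply: (P_roots_inj n_ge2 nu_range PE); rewrite (tE i).2 (tE j).2 tij.
rewrite (sum_trig_poly_shift a b x nu_range) // => m m_range.
apply: sum_cos_sin_of_power_sum.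
under eq_bigr do rewrite -(tE _).2.
by rewrite (power_sum_roots n_ge2 nu_range PE m_range); case: (m == nu).
Qed.
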